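(* Let $w\ge 5$ and let $C_1$ be the set of vertices $x=(x_1,\dots,x_{2w})$ of the Johnson graph $J(2w,w)$ such that $(x_1,x_2,x_3,x_4,x_5)\in B$, where $B=\{(0,0,0,0,0),(0,0,1,0,0),(0,0,0,1,0),(0,0,0,0,1),(1,0,1,0,0),(0,1,0,1,0),(0,0,1,0,1),(0,0,0,1,1),(1,1,1,1,1),(1,1,0,1,1),(1,1,1,0,1),(1,1,1,1,0),(0,1,0,1,1),(1,0,1,0,1),(1,1,0,1,0),(1,1,1,0,0)\}$, and let $C_2$ be the complement of $C_1$. Then $(C_1,C_2)$ is an equitable partition with quotient matrix $\begin{pmatrix} w^2-2w & 2w\\ 2w-2 & w^2-2w+2\end{pmatrix}$.
   Context: The Johnson graph $J(n,w)$ has as vertices the binary vectors of length $n$ with exactly $w$ ones; two vertices are adjacent iff they have exactly $w-1$ common ones. A partition $(C_1,C_2)$ of the vertex set is equitable with quotient matrix $S=(s_{ij})$ if every vertex of $C_i$ has exactly $s_{ij}$ neighbours in $C_j$. *)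

From mathcomp Require Import all_boot.
Set Implicit Arguments. Unset Strict Implicit. Unset Printing Implicit Defensive.

Definition jvert (n w : nat) : {set {ffun 'I_n -> bool}} :=
  [set x : {ffun 'I_n -> bool} | #|[set i | x i]| == w].

Definition jadj (n w : nat) (x y : {ffun 'I_n -> bool}) : bool :=
  #|[set i | x i && y i]| == w.-1.

(* The j-th coordinate (0-based) of x, i.e. x_{j+1} in the paper. *)
Definition coord (n : nat) (x : {ffun 'I_n -> bool}) (j : nat) : bool :=
  [exists i : 'I_n, (val i == j) && x i].

Definition B : seq (seq bool) :=
  [:: [:: false; false; false; false; false];
      [:: false; false; true ; false; false];
      [:: false; false; false; true ; false];
      [:: false; false; false; false; true ];
      [:: true ; false; true ; false; false];
      [:: false; true ; false; true ; false];
      [:: false; false; true ; false; true ];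
      [:: false; false; false; true ; true ];
      [:: true ; true ; true ; true ; true ];
      [:: true ; true ; false; true ; true ];
      [:: true ; true ; true ; false; true ];
      [:: true ; true ; true ; true ; false];
      [:: false; true ; false; true ; true ];
      [:: true ; false; true ; false; true ];
      [:: true ; true ; false; true ; false];
      [:: true ; true ; true ; false; false] ].

Definition C1 (w : nat) : {set {ffun 'I_(2 * w) -> bool}} :=
  [set x in jvert (2 * w) w |
     [:: coord x 0; coord x 1; coord x 2; coord x 3; coord x 4] \in B].

Definition C2 (w : nat) : {set {ffun 'I_(2 * w) -> bool}} :=
  jvert (2 * w) w :\: C1 w.

Definition nbrs_in (T : finType) (V : {set T}) (adj : rel T) (x : T) (C : {set T}) : nat :=
  #|[set y in V | (y \in C) && adj x y]|.

Definition equitable2 (T : finType) (V : {set T}) (adj : rel T)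
    (D1 D2 : {set T}) (s11 s12 s21 s22 : nat) : Prop :=
  [/\ D1 :|: D2 = V, [disjoint D1 & D2], (D1 != set0) && (D2 != set0),
      (forall x, x \in D1 -> nbrs_in V adj x D1 = s11 /\ nbrs_in V adj x D2 = s12) &
      (forall x, x \in D2 -> nbrs_in V adj x D1 = s21 /\ nbrs_in V adj x D2 = s22)].

(* The neighbours of a vertex x of J(n,w) are exactly the vectors obtained from x by moving
   one of its ones, at a position i, to a zero position j, and distinct pairs (i, j) give
   distinct neighbours.  Whether the result lies in C_1 depends only on the first five
   coordinates of x and on which of i, j lie among them: all later positions behave alike.
   So the number of neighbours in C_1 is a polynomial in the numbers of ones and zeros of x
   beyond the fifth coordinate, one polynomial per prefix, and checking the 32 prefixes
   gives w^2 - 2w or 2w - 2 according as the prefix is in B.  The counts into C_2 follow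
   because J(2w, w) is w^2-regular. *)

From mathcomp Require Import all_boot zify.
Set Implicit Arguments. Unset Strict Implicit. Unset Printing Implicit Defensive.

Section JohnsonNeighbours.
Variables n w : nat.
Implicit Types (x y : {ffun 'I_n -> bool}) (i j : 'I_n).

Definition jswap x i j : {ffun 'I_n -> bool} :=
  [ffun k => if k == i then false else if k == j then true else x k].

Lemma sum_jvert x : x \in jvert n w -> \sum_i (x i : nat) = w.
Proof.
rewrite inE => /eqP <-; rewrite -sum1_card [RHS]big_mkcond /=.
by apply: eq_bigr => i _; rewrite inE; case: (x i).
Qed.

Lemma card_jswap_common x i j : x \in jvert n w -> x i -> ~~ x j ->
  #|[set k | x k && jswap x i j k]| = w.-1.
Proof.
rewrite inE => /eqP cx xi xj.
have -> : [set k | x k && jswap x i j k] = [set k | x k] :\ i.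
  apply/setP => k; rewrite !inE ffunE.
  case: (eqVneq k i) => [->|_]; first by rewrite andbF.
  by case: (eqVneq k j) => [->|_]; rewrite ?(negbTE xj) ?andbb.
by move: (cardsD1 i [set k | x k]); rewrite cx inE xi => ->.
Qed.

Lemma jadj_jswap x i j : x \in jvert n w -> x i -> ~~ x j -> jadj w x (jswap x i j).
Proof. by move=> xV xi xj; rewrite /jadj card_jswap_common. Qed.

Lemma jswap_jvert x i j : x \in jvert n w -> x i -> ~~ x j -> jswap x i j \in jvert n w.
Proof.
move=> xV xi xj; have := card_jswap_common xV xi xj.
move: xV; rewrite !inE => /eqP cx.
have ij : i != j by apply: contraNneq xj => <-.
have -> : [set k | jswap x i j k] = j |: [set k | x k && jswap x i j k].
  apply/setP => k; rewrite !inE !ffunE.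
  case: ifP => [/eqP->|_]; first by rewrite (negbTE ij) andbF.
  by case: ifP; rewrite ?andbb.
have w_gt0 : 0 < w by rewrite -cx; apply/card_gt0P; exists i; rewrite inE.
by rewrite cardsU1 !inE ffunE eqxx (negbTE xj) => ->; apply/eqP; lia.
Qed.

Lemma jadj_jswapP x y : 0 < w -> x \in jvert n w -> y \in jvert n w -> jadj w x y ->
  exists2 p : 'I_n * 'I_n, x p.1 && ~~ x p.2 & y = jswap x p.1 p.2.
Proof.
rewrite /jvert /jadj !inE => w_gt0 /eqP cx /eqP cy /eqP cxy.
have I : [set k | x k && y k] = [set k | x k] :&: [set k | y k].
  by apply/setP => k; rewrite !inE.
have /cards1P[i Ei] : #|[set k | x k] :\: [set k | y k]| == 1.
  by move: (cardsID [set k | y k] [set k | x k]); rewrite -I cxy cx; lia.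
have /cards1P[j Ej] : #|[set k | y k] :\: [set k | x k]| == 1.
  by move: (cardsID [set k | x k] [set k | y k]); rewrite setIC -I cxy cy; lia.
have := set11 i; have := set11 j; rewrite -Ei -Ej !inE => /andP[xj yj] /andP[yi xi].
exists (i, j); first by rewrite /= xi xj.
apply/ffunP => k; rewrite ffunE.
case: (eqVneq k i) => [->|ki]; first exact/negbTE.
case: (eqVneq k j) => [->|kj] //.
have : k \notin [set k | x k] :\: [set k | y k] by rewrite Ei inE.
have : k \notin [set k | y k] :\: [set k | x k] by rewrite Ej inE.
by rewrite !inE; case: (x k); case: (y k).
Qed.

Lemma jswap_inj x i j i' j' : x i -> ~~ x j -> x i' -> ~~ x j' ->
  jswap x i j = jswap x i' j' -> (i, j) = (i', j').
Proof.
move=> xi xj xi' xj' e.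
have ii' : i = i'.
  apply/eqP; apply: contraTT isT => ne.
  have := congr1 (fun f : {ffun _} => f i) e.
  by rewrite !ffunE eqxx (negbTE ne) xi; case: (i == j').
subst i'; congr (_, _); apply/eqP; apply: contraTT isT => ne.
have j'i : j' != i by apply: contraNneq xj' => ->.
have := congr1 (fun f : {ffun _} => f j') e.
by rewrite !ffunE eqxx (negbTE j'i) eq_sym (negbTE ne) (negbTE xj').
Qed.

Lemma nbrs_in_jswap (C : {set {ffun 'I_n -> bool}}) x : 0 < w -> x \in jvert n w ->
  nbrs_in (jvert n w) (@jadj n w) x C =
  \sum_i \sum_j (x i && ~~ x j && (jswap x i j \in C)).
Proof.
move=> w_gt0 xV.
set S := [set p : 'I_n * 'I_n | x p.1 && ~~ x p.2 && (jswap x p.1 p.2 \in C)].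
have -> : \sum_i \sum_j (x i && ~~ x j && (jswap x i j \in C)) = #|S|.
  rewrite pair_big -sum1_card [RHS]big_mkcond /=; apply: eq_bigr => p _.
  by rewrite inE; case: (_ && _).
rewrite /nbrs_in.
have -> : [set y in jvert n w | (y \in C) && jadj w x y] = (fun p => jswap x p.1 p.2) @: S.
  apply/setP => y; rewrite inE; apply/andP/imsetP => [[yV /andP[yC xy]]|[[i j]]].
    have [p xp ey] := jadj_jswapP w_gt0 xV yV xy.
    by exists p; rewrite // inE xp -ey.
  rewrite inE /= => /andP[/andP[xi xj] sC] ->.
  by rewrite jswap_jvert // sC jadj_jswap.
rewrite card_in_imset // => [[i j] [i' j']].
by rewrite !inE /= => /andP[/andP[xi xj] _] /andP[/andP[xi' xj'] _]; apply: jswap_inj.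
Qed.

Lemma nbrs_in_setD (C : {set {ffun 'I_n -> bool}}) x : 0 < w -> x \in jvert n w ->
  nbrs_in (jvert n w) (@jadj n w) x C +
  nbrs_in (jvert n w) (@jadj n w) x (jvert n w :\: C) = w * (n - w).
Proof.
move=> w_gt0 xV; rewrite !nbrs_in_jswap // -big_split /=.
transitivity (\sum_i \sum_j (x i * ~~ x j)).
  apply: eq_bigr => i _; rewrite -big_split; apply: eq_bigr => j _ /=.
  case: (boolP (x i)) => xi; case: (boolP (x j)) => xj //=.
  by rewrite inE jswap_jvert //; case: (_ \in C).
have sum_compl : \sum_j (x j : nat) + \sum_j (~~ x j : nat) = n.
  rewrite -big_split /= -[n in RHS]card_ord -sum1_card.
  by apply: eq_bigr => j _; case: (x j).
by rewrite -big_distrlr /= -[in RHS]sum_compl sum_jvert // addKn.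
Qed.

Lemma initial_ones_jvert : w <= n -> [ffun i : 'I_n => i < w] \in jvert n w.
Proof.
move=> le_wn; rewrite inE.
have -> : [set i | [ffun i : 'I_n => i < w] i] = [set widen_ord le_wn k | k : 'I_w].
  apply/setP => i; rewrite !inE ffunE; apply/idP/imsetP => [lt_iw|[k _ ->]].
    by exists (Ordinal lt_iw) => //; apply: val_inj.
  by rewrite /= ltn_ord.
by rewrite card_imset ?card_ord // => a b [] /val_inj.
Qed.

End JohnsonNeighbours.

Definition nswap (f : nat -> bool) (i j k : nat) : bool :=
  if k == i then false else if k == j then true else f k.

Lemma coordE n (x : {ffun 'I_n -> bool}) (k : 'I_n) : coord x k = x k.
Proof.
apply/existsP/idP => [[i /andP[/eqP/val_inj -> //]]|xk].
by exists k; rewrite eqxx.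
Qed.

Lemma coord_out n (x : {ffun 'I_n -> bool}) k : n <= k -> coord x k = false.
Proof.
move=> le_nk; apply/existsP => -[i /andP[/eqP ik _]].
by move: (ltn_ord i); rewrite ik ltnNge le_nk.
Qed.

Lemma coord_jswap n (x : {ffun 'I_n -> bool}) (i j : 'I_n) :
  coord (jswap x i j) =1 nswap (coord x) i j.
Proof.
move=> k; case: (ltnP k n) => [lt_kn|le_nk].
  by rewrite -[k]/(nat_of_ord (Ordinal lt_kn)) /nswap !coordE ffunE.
have far (l : 'I_n) : k == l = false.
  by apply/negbTE; rewrite neq_ltn (leq_trans _ le_nk) ?orbT.
by rewrite /nswap !coord_out // !far.
Qed.

Lemma mkseq_nswap_min f m i j :
  mkseq (nswap f i j) m = mkseq (nswap f (minn i m) (minn j m)) m.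
Proof.
apply/eq_in_map => k; rewrite mem_iota add0n => /andP[_ lt_km].
have minE l : (k == minn l m) = (k == l).
  by case: leqP => // lt_ml; rewrite !ltn_eqF // (ltn_trans lt_km).
by rewrite /nswap !minE.
Qed.

Lemma sum2_collapse_tail (a b : nat -> nat) (F : nat -> nat -> nat) m n : m <= n ->
    (forall i j, F i j = F (minn i m) (minn j m)) ->
  \sum_(0 <= i < n) \sum_(0 <= j < n) a i * (b j * F i j) =
  \sum_(0 <= i < m) a i * (\sum_(0 <= j < m) b j * F i j + F i m * \sum_(m <= j < n) b j)
  + (\sum_(m <= i < n) a i) *
    (\sum_(0 <= j < m) b j * F m j + F m m * \sum_(m <= j < n) b j).
Proof.
move=> le_mn Fmin.
have Ftail i j : m <= j -> F i j = F i m.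
  by move=> le_mj; rewrite Fmin (Fmin i m) minnn (minn_idPr le_mj).
have Fhead i j : m <= i -> F i j = F m j.
  by move=> le_mi; rewrite Fmin (Fmin m j) minnn (minn_idPr le_mi).
have row i : \sum_(0 <= j < n) b j * F i j =
    \sum_(0 <= j < m) b j * F i j + F i m * \sum_(m <= j < n) b j.
  rewrite (@big_cat_nat _ _ _ m 0 n) //= big_distrr /=; congr (_ + _).
  by apply: eq_big_nat => j /andP[le_mj _]; rewrite Ftail // mulnC.
under eq_bigr do rewrite -big_distrr /= row.
rewrite (@big_cat_nat _ _ _ m 0 n) //= big_distrl /=; congr (_ + _).
apply: eq_big_nat => i /andP[le_mi _]; congr (_ * (_ + _)); last by rewrite Fhead.
by apply: eq_big_nat => j _; rewrite Fhead.
Qed.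

Definition swap_inB (f : nat -> bool) (i j : nat) : nat := mkseq (nswap f i j) 5 \in B.

(* [O] and [Z] count the ones and the zeros of [f] at positions 5, ..., 2w - 1. *)
Lemma swap_inB_count (f : nat -> bool) (O Z w : nat) :
    O + (f 0 + f 1 + f 2 + f 3 + f 4) = w -> O + Z + 5 = 2 * w ->
  \sum_(0 <= i < 5) f i *
      (\sum_(0 <= j < 5) ~~ f j * swap_inB f i j + swap_inB f i 5 * Z)
  + O * (\sum_(0 <= j < 5) ~~ f j * swap_inB f 5 j + swap_inB f 5 5 * Z)
  = if mkseq f 5 \in B then w ^ 2 - 2 * w else 2 * w - 2.
Proof.
rewrite /index_iota /= !big_cons !big_nil /swap_inB /nswap /mkseq /=.
by case: (f 0); case: (f 1); case: (f 2); case: (f 3); case: (f 4) => /=; nia.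
Qed.

Lemma C1E w x : (x \in C1 w) = (x \in jvert (2 * w) w) && (mkseq (coord x) 5 \in B).
Proof. by rewrite inE. Qed.

Lemma initial_ones_C1 w : 5 <= w -> [ffun i : 'I_(2 * w) => i < w] \in C1 w.
Proof.
move=> w_ge5; rewrite C1E initial_ones_jvert; last by lia.
have head k : k < 5 -> coord [ffun i : 'I_(2 * w) => i < w] k.
  move=> lt_k5; have lt_kn : k < 2 * w by lia.
  by rewrite -[k]/(nat_of_ord (Ordinal lt_kn)) coordE ffunE /=; lia.
by rewrite /mkseq /= !head.
Qed.

Lemma nbrs_in_C1 w x : 5 <= w -> x \in jvert (2 * w) w ->
  nbrs_in (jvert (2 * w) w) (@jadj (2 * w) w) x (C1 w) =
  if mkseq (coord x) 5 \in B then w ^ 2 - 2 * w else 2 * w - 2.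
Proof.
move=> w_ge5 xV; rewrite nbrs_in_jswap //; last by lia.
set f := coord x.
have term (i j : 'I_(2 * w)) :
    (x i && ~~ x j && (jswap x i j \in C1 w) : nat) = f i * (~~ f j * swap_inB f i j).
  rewrite /f !coordE; case: (boolP (x i)) => xi; case: (boolP (x j)) => xj //=.
  by rewrite C1E jswap_jvert // /swap_inB (eq_mkseq (coord_jswap x i j)); case: (_ \in B).
under eq_bigr do under eq_bigr do rewrite term.
rewrite -(big_mkord xpredT (fun i => \sum_(j < 2 * w) f i * (~~ f j * swap_inB f i j))).
under eq_bigr => i _ do rewrite -(big_mkord xpredT (fun j => f i * (~~ f j * swap_inB f i j))).
have le_5n : 5 <= 2 * w by lia.
have Fmin i j : swap_inB f i j = swap_inB f (minn i 5) (minn j 5).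
  by rewrite /swap_inB mkseq_nswap_min.
rewrite (sum2_collapse_tail _ _ le_5n Fmin); apply: swap_inB_count.
- have : \sum_(0 <= k < 2 * w) f k = w.
    by rewrite big_mkord -[RHS](sum_jvert xV); apply: eq_bigr => i _; rewrite /f coordE.
  by rewrite (@big_cat_nat _ _ _ 5) ?big_nat_recr //= big_nil; lia.
- rewrite -big_split /= (eq_bigr (fun=> 1)) ?sum_nat_const_nat; first by lia.
  by move=> k _; case: (f k).
Qed.

Theorem mainTheorem4 (w : nat) (hw : 5 <= w) :
  equitable2 (jvert (2 * w) w) (@jadj (2 * w) w) (C1 w) (C2 w)
    (w ^ 2 - 2 * w) (2 * w) (2 * w - 2) (w ^ 2 - 2 * w + 2).
Proof.
have w_gt0 : 0 < w by lia.
have degree x : x \in jvert (2 * w) w ->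
    nbrs_in (jvert (2 * w) w) (@jadj (2 * w) w) x (C1 w) +
    nbrs_in (jvert (2 * w) w) (@jadj (2 * w) w) x (C2 w) = w * w.
  by move=> xV; rewrite nbrs_in_setD //; congr (_ * _); lia.
set x0 := [ffun i : 'I_(2 * w) => i < w].
have x0C1 : x0 \in C1 w by apply: initial_ones_C1.
split.
- rewrite /C2 setDE setUIr setUCr setIT.
  by apply/setUidPr/subsetP => x; rewrite C1E => /andP[].
- rewrite disjoint_sym.
  by have /subsetDP[] : C2 w \subset jvert (2 * w) w :\: C1 w := subxx _.
- apply/andP; split; apply/set0Pn; first by exists x0.
  move: x0C1; rewrite C1E => /andP[x0V x0B].
  have : 0 < nbrs_in (jvert (2 * w) w) (@jadj (2 * w) w) x0 (C2 w).
    by move: (degree x0 x0V); rewrite nbrs_in_C1 // x0B; nia.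
  by rewrite card_gt0 => /set0Pn[y]; rewrite inE => /andP[_ /andP[yC2 _]]; exists y.
- move=> x; rewrite C1E => /andP[xV xB].
  by move: (degree x xV); rewrite nbrs_in_C1 // xB; split; nia.
- move=> x; rewrite in_setD C1E => /andP[/nandP[/negP//|xB] xV].
  by move: (degree x xV); rewrite nbrs_in_C1 // (negbTE xB); split; nia.
Qed.
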